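(* Let $n\ge3$, let $W\subset\mathbb{H}^n$ be a real $2$-plane and $\{x,v\}$ a real orthonormal basis of $W$. Then $|\pi_x^\perp(v)|^2$ is independent of the choice of orthonormal basis $\{x,v\}$ of $W$, and it is a complete invariant for the action of $\mathrm{Sp}(n)\cdot\mathrm{Sp}(1)$ on the Grassmannian $G^{\mathbb{R}}(2,\mathbb{H}^n)$.
   Context: $\mathbb{H}^n=\mathbb{R}^{4n}$ with the standard real inner product; $\mathbb{H}x$ denotes the quaternion line through $x$ and $\pi_x^\perp$ is orthogonal projection onto $(\mathbb{H}x)^\perp$. $\mathrm{Sp}(n)$ acts by quaternion-linear isometries and $\mathrm{Sp}(1)$ by multiplication by unit quaternion scalars; $G^{\mathbb{R}}(2,\mathbb{H}^n)$ is the Grassmannian of real $2$-planes. ''Complete invariant'' means two real $2$-planes are in the same orbit iff their invariants coincide. *)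

From mathcomp Require Import all_boot all_order all_algebra.
Set Implicit Arguments. Unset Strict Implicit. Unset Printing Implicit Defensive.
Import Order.TTheory GRing.Theory Num.Theory.
Local Open Scope ring_scope.

Record quat (R : Type) := Quat { qre : R; qim : R; qjm : R; qkm : R }.

Section Quaternions.
Variable R : rcfType.

Definition qmul (p q : quat R) : quat R :=
  Quat (qre p * qre q - qim p * qim q - qjm p * qjm q - qkm p * qkm q)
       (qre p * qim q + qim p * qre q + qjm p * qkm q - qkm p * qjm q)
       (qre p * qjm q - qim p * qkm q + qjm p * qre q + qkm p * qim q)
       (qre p * qkm q + qim p * qjm q - qjm p * qim q + qkm p * qre q).
Definition qadd (p q : quat R) : quat R :=
  Quat (qre p + qre q) (qim p + qim q) (qjm p + qjm q) (qkm p + qkm q).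
Definition qscal (a : R) (q : quat R) : quat R :=
  Quat (a * qre q) (a * qim q) (a * qjm q) (a * qkm q).
Definition qdot (p q : quat R) : R :=
  qre p * qre q + qim p * qim q + qjm p * qjm q + qkm p * qkm q.
Definition qnorm2 (q : quat R) : R := qdot q q.
Definition q1 : quat R := Quat 1 0 0 0.
Definition qi : quat R := Quat 0 1 0 0.
Definition qj : quat R := Quat 0 0 1 0.
Definition qk : quat R := Quat 0 0 0 1.

(* H^n, with quaternion scalars acting on the left (so Hx = {q x}). *)
Definition hvec (n : nat) := 'I_n -> quat R.

Variable n : nat.
Definition vadd (x y : hvec n) : hvec n := fun i => qadd (x i) (y i).
Definition vscale (a : R) (x : hvec n) : hvec n := fun i => qscal a (x i).
Definition vsub (x y : hvec n) : hvec n := vadd x (vscale (-1) y).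
Definition lmulv (q : quat R) (x : hvec n) : hvec n := fun i => qmul q (x i).
Definition ip (x y : hvec n) : R := \sum_(i < n) qdot (x i) (y i).

(* orthogonal projection onto (Hx)^perp, x <> 0: the real vectors
   x, ix, jx, kx form an orthogonal real basis of Hx, all of norm |x|. *)
Definition piperp (x v : hvec n) : hvec n :=
  let c e := vscale (ip v (lmulv e x) / ip x x) (lmulv e x) in
  vsub v (vadd (c q1) (vadd (c qi) (vadd (c qj) (c qk)))).

Definition inv2 (x v : hvec n) : R := ip (piperp x v) (piperp x v).

Definition is_Sp (f : hvec n -> hvec n) : Prop :=
  [/\ (forall a x y, f (vadd (vscale a x) y) = vadd (vscale a (f x)) (f y)),
      (forall q x, f (lmulv q x) = lmulv q (f x)) &
      (forall x y, ip (f x) (f y) = ip x y)].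

Definition span2 (a b : hvec n) : hvec n -> Prop :=
  fun y => exists s t, y = vadd (vscale s a) (vscale t b).

Definition is_2plane (W : hvec n -> Prop) : Prop :=
  exists a b, (forall s t, vadd (vscale s a) (vscale t b) = (fun _ => Quat 0 0 0 0)
                           -> s = 0 /\ t = 0)
              /\ (forall y, W y <-> span2 a b y).

Definition onb (W : hvec n -> Prop) (x v : hvec n) : Prop :=
  [/\ ip x x = 1, ip v v = 1, ip x v = 0 & (forall y, W y <-> span2 x v y)].

(* W1, W2 lie in the same Sp(n).Sp(1)-orbit: W2 = g(W1) with
   g(z) = q f(z), f in Sp(n), q a unit quaternion. *)
Definition same_orbit (W1 W2 : hvec n -> Prop) : Prop :=
  exists f q, [/\ is_Sp f, qnorm2 q = 1 &
     (forall y, W2 y <-> exists z, W1 z /\ lmulv q (f z) = y)].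

End Quaternions.

From mathcomp Require Import all_boot all_order all_algebra ring lra.
From Stdlib Require Import FunctionalExtensionality.
Set Implicit Arguments. Unset Strict Implicit. Unset Printing Implicit Defensive.
Import Order.TTheory GRing.Theory Num.Theory.
Local Open Scope ring_scope.

(* Let <x, y> = sum_i x_i conj(y_i) be the quaternionic Hermitian product; its real part is
   the inner product.  For a unit vector x, pi_x^perp(v) = v - <v, x> x, so |pi_x^perp(v)|^2 =
   |x|^2 |v|^2 - |<x, v>|^2 is the determinant of the Hermitian Gram matrix of (x, v).  A real
   change of basis multiplies it by the square of its determinant, which is 1 between
   orthonormal bases.  An element of Sp(n) preserves <., .> and a unit scalar q conjugates it
   by q, so the invariant is constant on orbits.
   Conversely, write v = u x + y with u = <v, x> purely imaginary and y H-orthogonal to x, so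
   that |y|^2 is the invariant and |u|^2 = 1 - |y|^2.  A diagonal unit matrix followed by a
   quaternionic Householder reflection, used twice, gives g in Sp(n) with g x = e_0 and
   g y = |y| e_1.  Two imaginary quaternions of equal norm are conjugate by a unit c, and
   right multiplication by c on every coordinate, which lies in Sp(n), carries the normal
   form of one plane to c times that of the other. *)

Lemma quatP (R : rcfType) (p q : quat R) :
  qre p = qre q -> qim p = qim q -> qjm p = qjm q -> qkm p = qkm q -> p = q.
Proof. by case: p; case: q => /= ???? ???? -> -> -> ->. Qed.

Ltac qext := apply: quatP; rewrite /= ?/qmul ?/qadd ?/qscal /=; ring.

Section Quaternions.
Variable R : rcfType.
Implicit Types (p q u : quat R) (a : R).

Definition q0 : quat R := Quat 0 0 0 0.
Definition qreal a : quat R := Quat a 0 0 0.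
Definition qconj q : quat R := Quat (qre q) (- qim q) (- qjm q) (- qkm q).

Lemma quat_dotP p q : (forall e, qdot p e = qdot q e) -> p = q.
Proof.
move=> E; move: (E (q1 R)) (E (qi R)) (E (qj R)) (E (qk R)); clear E.
by case: p q => ????[????]; rewrite /qdot /= !(mulr0, mulr1, addr0, add0r) => -> -> -> ->.
Qed.

Lemma qmulA p q u : qmul p (qmul q u) = qmul (qmul p q) u. Proof. qext. Qed.
Lemma qscal1 q : qscal 1 q = q. Proof. qext. Qed.

Lemma qnorm2_mul p q : qnorm2 (qmul p q) = qnorm2 p * qnorm2 q.
Proof. rewrite /qnorm2 /qdot /=; ring. Qed.
Lemma qnorm2_conj q : qnorm2 (qconj q) = qnorm2 q.
Proof. rewrite /qnorm2 /qdot /=; ring. Qed.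
Lemma qnorm2_scal a q : qnorm2 (qscal a q) = a ^+ 2 * qnorm2 q.
Proof. rewrite /qnorm2 /qdot /=; ring. Qed.

Lemma qnorm2_ge0 q : 0 <= qnorm2 q.
Proof. by rewrite /qnorm2 /qdot !addr_ge0 // -expr2 sqr_ge0. Qed.

Lemma qnorm2_eq0 q : qnorm2 q = 0 -> q = q0.
Proof.
have sq_ge0 a : 0 <= a * a by rewrite -expr2 sqr_ge0.
case: q => a b c d /eqP; rewrite /qnorm2 /qdot /=.
rewrite !paddr_eq0 ?addr_ge0 // !mulf_eq0 !orbb.
by move=> /andP[/andP[/andP[/eqP-> /eqP->] /eqP->] /eqP->].
Qed.

Lemma qmul_mulconj p q : qmul (qmul p q) (qconj q) = qscal (qnorm2 q) p.
Proof. rewrite /qnorm2 /qdot; qext. Qed.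
Lemma qmul_conjmul p q : qmul (qconj q) (qmul q p) = qscal (qnorm2 q) p.
Proof. rewrite /qnorm2 /qdot; qext. Qed.

Lemma qdot_mulr p q u : qdot (qmul p u) (qmul q u) = qnorm2 u * qdot p q.
Proof. rewrite /qnorm2 /qdot /=; ring. Qed.

Lemma qre_conjugate q p : qre (qmul (qmul q p) (qconj q)) = qnorm2 q * qre p.
Proof. rewrite /qnorm2 /qdot /=; ring. Qed.

Definition qunit q : quat R :=
  if qnorm2 q == 0 then q1 R else qscal (Num.sqrt (qnorm2 q))^-1 q.

Lemma qnorm2_qunit q : qnorm2 (qunit q) = 1.
Proof.
rewrite /qunit; case: eqP => [_|/eqP nz]; first by rewrite /qnorm2 /qdot /=; ring.
rewrite qnorm2_scal exprVn sqr_sqrtr ?qnorm2_ge0 // mulVf //.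
Qed.

Lemma qmul_conj_qunit q : qmul q (qconj (qunit q)) = qreal (Num.sqrt (qnorm2 q)).
Proof.
rewrite /qunit; case: eqP => [/[dup] /qnorm2_eq0 -> ->|/eqP nz].
  by rewrite sqrtr0; qext.
have s_nz : Num.sqrt (qnorm2 q) != 0 by rewrite sqrtr_eq0 -ltNge lt_def nz qnorm2_ge0.
have s2 : Num.sqrt (qnorm2 q) ^+ 2 = qnorm2 q by rewrite sqr_sqrtr ?qnorm2_ge0.
move: s_nz s2; set s := Num.sqrt _ => s_nz s2.
apply: quatP => /=; [|ring|ring|ring].
by rewrite -[in RHS](mulKf s_nz s) -expr2 s2 /qnorm2 /qdot; field.
Qed.

Lemma qunit_intertwines p u1 u2 : qnorm2 p != 0 ->
  qmul u1 p = qmul p u2 -> qmul u1 (qunit p) = qmul (qunit p) u2.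
Proof.
rewrite /qunit => /negbTE -> E; move: (_^-1) => k.
have -> : qmul u1 (qscal k p) = qscal k (qmul u1 p) by qext.
have -> : qmul (qscal k p) u2 = qscal k (qmul p u2) by qext.
by rewrite E.
Qed.

Lemma imaginary_conjugate u1 u2 : qre u1 = 0 -> qre u2 = 0 -> qnorm2 u1 = qnorm2 u2 ->
  exists c, qnorm2 c = 1 /\ qmul u1 c = qmul c u2.
Proof.
move=> re1 re2 N12.
suff [p nz_p Ep] : exists2 p, qnorm2 p != 0 & qmul u1 p = qmul p u2.
  by exists (qunit p); rewrite qnorm2_qunit (qunit_intertwines nz_p Ep).
(* Imaginary quaternions square to [- |u|^2], whence [u1 p = |u1|^2 (u1 + u2) = p u2]. *)
pose p := qadd (qreal (qnorm2 u1)) (qscal (-1) (qmul u1 u2)).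
have Ep : qmul u1 p = qadd (qmul p u2) (qscal (qnorm2 u1 - qnorm2 u2) u1).
  rewrite /p /qnorm2 /qdot; clear p N12.
  by case: u1 re1 => ????; case: u2 re2 => ???? /= -> ->; qext.
have [p0|nz_p] := eqVneq (qnorm2 p) 0; last first.
  by exists p => //; rewrite Ep N12 subrr; qext.
have u2E : u2 = qscal (-1) u1.
  have : qnorm2 (qadd u1 u2) = 2 * qre p + (qnorm2 u2 - qnorm2 u1).
    rewrite /p /qnorm2 /qdot; clear p Ep p0 N12.
    by case: u1 re1 => ????; case: u2 re2 => ???? /= -> ->; ring.
  rewrite (qnorm2_eq0 p0) N12 subrr /= mulr0 addr0 => /qnorm2_eq0 [].
  by case: (u1) (u2) => ????[????] /= *; apply: quatP => /=; lra.
(* Now any nonzero imaginary quaternion orthogonal to [u1] anticommutes with it. *)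
rewrite u2E; case: u1 re1 {N12 Ep p0 u2E p} => a b c d /= ->.
have [ab0|ab_nz] := boolP ((b == 0) && (c == 0)).
  exists (qi R); first by rewrite /qnorm2 /qdot /=; lra.
  by case/andP: ab0 => /eqP-> /eqP->; qext.
exists (Quat 0 c (- b) 0); last by qext.
apply: contra ab_nz => /eqP/qnorm2_eq0[] -> /eqP; rewrite oppr_eq0 => ->.
by rewrite eqxx.
Qed.
End Quaternions.

Ltac vext := apply: functional_extensionality => ?; rewrite /vsub /vadd /vscale /lmulv /=; qext.

Section HermitianProduct.
Variables (R : rcfType) (n : nat).
Implicit Types (x y z v w : hvec R n) (p q u : quat R) (a b c d : R).

Definition vzero : hvec R n := fun _ => q0 R.

Definition hq x y : quat R :=
  Quat (\sum_(i < n) qre (qmul (x i) (qconj (y i))))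
       (\sum_(i < n) qim (qmul (x i) (qconj (y i))))
       (\sum_(i < n) qjm (qmul (x i) (qconj (y i))))
       (\sum_(i < n) qkm (qmul (x i) (qconj (y i)))).

Ltac hqext := apply: quatP; rewrite /= ?/lmulv ?/vadd ?/vscale ?/vsub
  ?mulr_sumr ?mulr_suml -?sumrN -?big_split /=; apply: eq_bigr => i _; rewrite /=; ring.

Lemma ip_hq x y : ip x y = qre (hq x y).
Proof. by apply: eq_bigr => i _; rewrite /qdot /=; ring. Qed.

Lemma hq_lmull q x y : hq (lmulv q x) y = qmul q (hq x y). Proof. hqext. Qed.
Lemma hq_lmulr q x y : hq x (lmulv q y) = qmul (hq x y) (qconj q). Proof. hqext. Qed.
Lemma hq_addl x y z : hq (vadd x y) z = qadd (hq x z) (hq y z). Proof. hqext. Qed.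
Lemma hq_addr x y z : hq z (vadd x y) = qadd (hq z x) (hq z y). Proof. hqext. Qed.
Lemma hq_scall a x y : hq (vscale a x) y = qscal a (hq x y). Proof. hqext. Qed.
Lemma hq_scalr a x y : hq x (vscale a y) = qscal a (hq x y). Proof. hqext. Qed.
Lemma hq_conj x y : hq y x = qconj (hq x y). Proof. hqext. Qed.

Definition hq_lin := (hq_addl, hq_addr, hq_scall, hq_scalr, hq_lmull, hq_lmulr).

Lemma hq_self x : hq x x = qreal (ip x x).
Proof.
apply: quatP; rewrite /= ?ip_hq //.
all: by rewrite big1 // => i _; rewrite /=; ring.
Qed.

Lemma ip_lmulr x y q : ip x (lmulv q y) = qdot (hq x y) q.
Proof. rewrite /qdot /= !mulr_suml -!big_split; apply: eq_bigr => i _; rewrite /qdot /=; ring. Qed.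

Lemma ip_sym x y : ip x y = ip y x.
Proof. by rewrite !ip_hq hq_conj. Qed.

Lemma ip_ge0 x : 0 <= ip x x.
Proof. by rewrite sumr_ge0 // => i _; apply: qnorm2_ge0. Qed.

Lemma ip_eq0 x : ip x x = 0 -> x = vzero.
Proof.
move=> /eqP; rewrite psumr_eq0 => [/allP x0|i _]; last exact: qnorm2_ge0.
by apply: functional_extensionality => i; apply/qnorm2_eq0/eqP/x0/mem_index_enum.
Qed.

Lemma vsub_eq0 x y : vsub x y = vzero -> x = y.
Proof.
move=> xy; apply: functional_extensionality => i; have := congr1 (fun z => z i) xy.
by rewrite /vsub /vadd /vscale; case: (x i) (y i) => ????[????] [] *; apply: quatP => /=; lra.
Qed.

Lemma lmulv_comp p q z : lmulv p (lmulv q z) = lmulv (qmul p q) z.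
Proof. vext. Qed.

Lemma lmulv_conjK q z : qnorm2 q = 1 -> lmulv (qconj q) (lmulv q z) = z.
Proof.
move=> q1; apply: functional_extensionality => i.
by rewrite /lmulv qmul_conjmul q1 qscal1.
Qed.

Lemma piperpE x v : piperp x v = vsub v (lmulv (qscal (ip x x)^-1 (hq v x)) x).
Proof. rewrite /piperp !ip_lmulr /qdot; vext. Qed.

Lemma inv2E x v : ip x x = 1 -> inv2 x v = ip v v - qnorm2 (hq v x).
Proof.
move=> x1; rewrite /inv2 piperpE x1 invr1 ip_hq /vsub !hq_lin !hq_self x1.
rewrite (hq_conj x v); move: (hq v x) => h; rewrite /qnorm2 /qdot /=; ring.
Qed.

Lemma onb_decomposition x v : ip x x = 1 -> ip v v = 1 -> ip x v = 0 ->
  exists u y, [/\ v = vadd (lmulv u x) y, hq y x = q0 R, ip y y = inv2 x v,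
                  qre u = 0 & qnorm2 u = 1 - inv2 x v].
Proof.
move=> x1 v1 xv; exists (hq v x), (piperp x v); split => //.
- by rewrite piperpE x1 invr1; vext.
- by rewrite piperpE x1 invr1 /vsub !hq_lin hq_self x1; qext.
- by rewrite -ip_hq ip_sym.
- by rewrite inv2E // v1; ring.
Qed.

Definition gram x v := ip x x * ip v v - qnorm2 (hq x v).

Lemma inv2_gram x v : ip x x = 1 -> inv2 x v = gram x v.
Proof. by move=> x1; rewrite inv2E // /gram x1 mul1r hq_conj qnorm2_conj. Qed.

Lemma gram_comb a b c d x v :
  gram (vadd (vscale a x) (vscale b v)) (vadd (vscale c x) (vscale d v)) =
  (a * d - b * c) ^+ 2 * gram x v.
Proof.
rewrite /gram !ip_hq !hq_lin (hq_conj x v) !hq_self.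
by move: (hq x v) => [h0 h1 h2 h3]; rewrite /qnorm2 /qdot /=; ring.
Qed.

Lemma ip_comb_orthonormal a b c d x v : ip x x = 1 -> ip v v = 1 -> ip x v = 0 ->
  ip (vadd (vscale a x) (vscale b v)) (vadd (vscale c x) (vscale d v)) = a * c + b * d.
Proof.
move=> x1 v1; rewrite !ip_hq !hq_lin (hq_conj x v) !hq_self x1 v1.
by move: (hq x v) => [h0 h1 h2 h3] /= ->; ring.
Qed.

Lemma inv2_onb W x v x' v' : onb W x v -> onb W x' v' -> inv2 x v = inv2 x' v'.
Proof.
case=> x1 v1 xv W_xv [x'1 v'1 x'v' W_x'v'].
have /W_xv [a [b x'E]] : W x' by apply/W_x'v'; exists 1, 0; vext.
have /W_xv [c [d v'E]] : W v' by apply/W_x'v'; exists 0, 1; vext.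
have det1 : (a * d - b * c) ^+ 2 = 1.
  move: x'1 v'1 x'v'; rewrite x'E v'E !ip_comb_orthonormal // => E1 E2 E3.
  have -> : (a * d - b * c) ^+ 2 = (a * a + b * b) * (c * c + d * d) - (a * c + b * d) ^+ 2
    by ring.
  by rewrite E1 E2 E3; ring.
by rewrite !inv2_gram // x'E v'E gram_comb det1 mul1r.
Qed.

End HermitianProduct.
Arguments vzero {R n}.

Section SpMaps.
Variables (R : rcfType) (n : nat) (f : hvec R n -> hvec R n).
Hypothesis Sp_f : is_Sp f.
Implicit Types (x y z v : hvec R n) (q : quat R) (a b : R).

Lemma Sp_lmul q x : f (lmulv q x) = lmulv q (f x). Proof. by case: Sp_f. Qed.
Lemma Sp_ip x y : ip (f x) (f y) = ip x y. Proof. by case: Sp_f. Qed.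

Lemma Sp_scal a x : f (vscale a x) = vscale a (f x).
Proof.
case: Sp_f => lin _ _.
have f0 : f vzero = vzero.
  have vzeroE : vadd (vscale (-1) vzero) vzero = vzero :> hvec R n by vext.
  by move: (lin (-1) vzero vzero); rewrite vzeroE => ->; vext.
have axE : vadd (vscale a x) vzero = vscale a x by vext.
by move: (lin a x vzero); rewrite axE f0 => ->; vext.
Qed.

Lemma Sp_add x y : f (vadd x y) = vadd (f x) (f y).
Proof.
case: Sp_f => lin _ _.
have xE : vscale 1 x = x by vext.
by move: (lin 1 x y); rewrite !xE => ->; vext.
Qed.

Lemma Sp_hq x y : hq (f x) (f y) = hq x y.
Proof. by apply: quat_dotP => e; rewrite -!ip_lmulr -Sp_lmul Sp_ip. Qed.

Lemma orbit_comb q a b x y :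
  lmulv q (f (vadd (vscale a x) (vscale b y))) =
  vadd (vscale a (lmulv q (f x))) (vscale b (lmulv q (f y))).
Proof. rewrite Sp_add !Sp_scal; vext. Qed.

Lemma hq_orbit q x y :
  hq (lmulv q (f x)) (lmulv q (f y)) = qmul (qmul q (hq x y)) (qconj q).
Proof. by rewrite hq_lmull hq_lmulr Sp_hq qmulA. Qed.

Lemma ip_orbit q x y : qnorm2 q = 1 -> ip (lmulv q (f x)) (lmulv q (f y)) = ip x y.
Proof. by move=> q1; rewrite !ip_hq hq_orbit qre_conjugate q1 mul1r. Qed.

Lemma gram_orbit q x y : qnorm2 q = 1 -> gram (lmulv q (f x)) (lmulv q (f y)) = gram x y.
Proof.
by move=> q1; rewrite /gram !ip_orbit // hq_orbit !qnorm2_mul qnorm2_conj q1 mul1r mulr1.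
Qed.

Lemma orbit_span (W : hvec R n -> Prop) q x v :
  (forall y, W y <-> span2 x v y) -> forall y,
  (exists z, W z /\ lmulv q (f z) = y) <-> span2 (lmulv q (f x)) (lmulv q (f v)) y.
Proof.
move=> WE y; split=> [[z [/WE[a [b ->]] <-]]|[a [b ->]]].
  by exists a, b; rewrite orbit_comb.
by exists (vadd (vscale a x) (vscale b v)); split; [apply/WE; exists a, b | rewrite orbit_comb].
Qed.

Lemma onb_orbit W1 W2 q x v : qnorm2 q = 1 ->
  (forall y, W2 y <-> exists z, W1 z /\ lmulv q (f z) = y) ->
  onb W1 x v -> onb W2 (lmulv q (f x)) (lmulv q (f v)).
Proof.
move=> q1 W2E [x1 v1 xv W1E]; split; rewrite ?ip_orbit // => y.
exact: iff_trans (W2E y) (orbit_span q W1E y).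
Qed.

Lemma same_orbit_of_basis W1 W2 q x1 v1 x2 v2 : qnorm2 q = 1 ->
  (forall y, W1 y <-> span2 x1 v1 y) -> (forall y, W2 y <-> span2 x2 v2 y) ->
  lmulv q (f x1) = x2 -> lmulv q (f v1) = v2 -> same_orbit W1 W2.
Proof.
move=> q1 W1E W2E fx1 fv1; exists f, q; split => // y.
rewrite -fx1 -fv1 in W2E; exact: iff_trans (W2E y) (iff_sym (orbit_span q W1E y)).
Qed.

End SpMaps.

Lemma inv2_same_orbit (R : rcfType) n (W1 W2 : hvec R n -> Prop) x1 v1 x2 v2 :
  onb W1 x1 v1 -> onb W2 x2 v2 -> same_orbit W1 W2 -> inv2 x1 v1 = inv2 x2 v2.
Proof.
move=> O1 O2 [f [q [Sp_f q1 W2E]]].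
have O3 := onb_orbit Sp_f q1 W2E O1.
case: O1 (O3) => x1_1 _ _ _ [fx1_1 _ _ _].
by rewrite (inv2_onb O2 O3) !inv2_gram // gram_orbit.
Qed.

Section SpNormalForm.
Variables (R : rcfType) (n : nat).
Implicit Types (x y z v w : hvec R n) (q : quat R) (a : R) (f g : hvec R n -> hvec R n).

Definition ek (k : 'I_n) : hvec R n := fun i => if i == k then q1 R else q0 R.

Lemma hq_ek z k : hq z (ek k) = z k.
Proof.
apply: quatP => /=; rewrite (bigD1 k) //= big1 ?addr0 /ek ?eqxx /=;
  try (move=> i /negbTE ->); rewrite /=; ring.
Qed.

Definition Sp_cancel f g := [/\ is_Sp f, is_Sp g & cancel f g].

Lemma Sp_comp f g : is_Sp f -> is_Sp g -> is_Sp (f \o g).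
Proof.
move=> Sp_f Sp_g; split=> [a x y | q x | x y] /=.
- by rewrite !Sp_add ?Sp_scal.
- by rewrite !Sp_lmul.
- by rewrite !Sp_ip.
Qed.

Lemma Sp_cancel_comp f1 g1 f2 g2 :
  Sp_cancel f1 g1 -> Sp_cancel f2 g2 -> Sp_cancel (f2 \o f1) (g1 \o g2).
Proof.
case=> Sp_f1 Sp_g1 fg1 [Sp_f2 Sp_g2 fg2]; split; try exact: Sp_comp.
by move=> z /=; rewrite fg2 fg1.
Qed.

Definition reflection w z : hvec R n := vsub z (lmulv (qscal (2 / ip w w) (hq z w)) w).

(* Also true for [N = 0], where [2 / 0 = 0] makes the reflection the identity. *)
Lemma reflection_coef (N : R) : 2 / N * (N * (2 / N) - 2) = 0.
Proof.
have [->|N0] := eqVneq N 0; first by rewrite invr0 !mulr0 mul0r.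
by rewrite mulrCA divff // mulr1 subrr mulr0.
Qed.

Lemma reflection_Sp w : is_Sp (reflection w).
Proof.
rewrite /reflection; move: (reflection_coef (ip w w)); move: (2 / _) => k Ek.
split=> [a x y | q x | x y]; rewrite ?hq_lin; try by vext.
rewrite !ip_hq /vsub !hq_lin (hq_conj y w) hq_self.
move: (hq x w) (hq y w) (hq x y) (ip w w) Ek => [a0 a1 a2 a3] [b0 b1 b2 b3] h N Ek.
apply: subr0_eq; rewrite -[0](mul0r (a0 * b0 + a1 * b1 + a2 * b2 + a3 * b3)) -Ek /=.
ring.
Qed.

Lemma reflectionK w : involutive (reflection w).
Proof.
move=> z; rewrite {1}/reflection.
have -> : hq (reflection w z) w = qscal (1 - 2 / ip w w * ip w w) (hq z w).
  by rewrite /reflection /vsub !hq_lin hq_self; qext.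
move: (reflection_coef (ip w w)); rewrite /reflection; move: (2 / _) => k Ek.
transitivity (vsub z (lmulv (qscal (- (k * (ip w w * k - 2))) (hq z w)) w)); first by vext.
by rewrite Ek oppr0; vext.
Qed.

Lemma reflection_Sp_cancel w : Sp_cancel (reflection w) (reflection w).
Proof. by split; [exact: reflection_Sp | exact: reflection_Sp | exact: reflectionK]. Qed.

Lemma reflection_fix w z : hq z w = q0 R -> reflection w z = z.
Proof. by rewrite /reflection => ->; vext. Qed.

Lemma reflection_swap x y r : ip x x = ip y y -> hq x y = qreal r ->
  reflection (vsub x y) x = y.
Proof.
move=> xy hxy; set w := vsub x y.
have [/ip_eq0/vsub_eq0 xy_eq|w_nz] := eqVneq (ip w w) 0.
  by rewrite /reflection /w xy_eq; vext.
have ww : ip w w = 2 * (ip x x - r).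
  by rewrite ip_hq /w /vsub !hq_lin (hq_conj x y) !hq_self hxy xy /=; ring.
have c_nz : ip x x - r != 0 by apply: contraNneq w_nz => c0; rewrite ww c0 mulr0.
rewrite /reflection.
have -> : hq x w = qreal (ip x x - r) by rewrite /w /vsub !hq_lin hq_self hxy; qext.
have -> : qscal (2 / ip w w) (qreal (ip x x - r)) = q1 R.
  by rewrite ww; apply: quatP; rewrite /= ?mulr0 //; field.
by rewrite /w; vext.
Qed.

Definition rdiag (r : 'I_n -> quat R) z : hvec R n := fun i => qmul (z i) (r i).

Lemma rdiag_Sp r : (forall i, qnorm2 (r i) = 1) -> is_Sp (rdiag r).
Proof.
move=> r1; split=> [a x y | q x | x y]; try by vext.
by apply: eq_bigr => i _; rewrite qdot_mulr r1 mul1r.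
Qed.

Lemma rdiag_Sp_cancel r : (forall i, qnorm2 (r i) = 1) ->
  Sp_cancel (rdiag r) (rdiag (fun i => qconj (r i))).
Proof.
move=> r1; split; first exact: rdiag_Sp.
  by apply: rdiag_Sp => i; rewrite qnorm2_conj.
move=> z; apply: functional_extensionality => i.
by rewrite /rdiag qmul_mulconj r1 qscal1.
Qed.

Lemma rdiag_const_ek q k : rdiag (fun _ => q) (ek k) = lmulv q (ek k).
Proof. by apply: functional_extensionality => i; rewrite /rdiag /lmulv /ek /=; case: eqP => _; qext. Qed.

Lemma Sp_to_axis z k : exists f g, [/\ Sp_cancel f g,
  f z = vscale (Num.sqrt (ip z z)) (ek k) &
  forall w, w k = q0 R -> hq z w = q0 R -> f w = w].
Proof.
pose r i := if i == k then qconj (qunit (z k)) else q1 R.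
have r1 i : qnorm2 (r i) = 1.
  by rewrite /r; case: eqP => _; rewrite ?qnorm2_conj ?qnorm2_qunit // /qnorm2 /qdot /=; ring.
have [Sp_D _ _] := rdiag_Sp_cancel r1.
set s := Num.sqrt (ip z z); set a := rdiag r z; set b := vscale s (ek k).
have Rab : reflection (vsub a b) a = b.
  apply: (@reflection_swap _ _ (s * Num.sqrt (qnorm2 (z k)))).
    rewrite (Sp_ip Sp_D) [ip b b]ip_hq hq_scall hq_scalr hq_ek /ek eqxx /=.
    by rewrite mulr1 -expr2 sqr_sqrtr ?ip_ge0.
  by rewrite hq_scalr hq_ek /a /rdiag /r eqxx qmul_conj_qunit; qext.
exists (reflection (vsub a b) \o rdiag r), (rdiag (fun i => qconj (r i)) \o reflection (vsub a b)).
split=> [||w wk zw /=].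
- exact: Sp_cancel_comp (rdiag_Sp_cancel r1) (reflection_Sp_cancel _).
- exact: Rab.
have Dw : rdiag r w = w.
  by apply: functional_extensionality => i; rewrite /rdiag /r; case: eqP => [->|_]; rewrite ?wk; qext.
have wa : hq w a = q0 R by rewrite -Dw /a (Sp_hq Sp_D) hq_conj zw; qext.
by rewrite Dw reflection_fix // /vsub !hq_lin wa hq_ek wk; qext.
Qed.

Lemma Sp_normal_form (i0 i1 : 'I_n) x y : i0 != i1 -> ip x x = 1 -> hq y x = q0 R ->
  exists f g, [/\ Sp_cancel f g, f x = ek i0 & f y = vscale (Num.sqrt (ip y y)) (ek i1)].
Proof.
move=> i01 x1 yx.
have [f1 [g1 [fg1 f1x _]]] := Sp_to_axis x i0.
have {}f1x : f1 x = ek i0 by rewrite f1x x1 sqrtr1; vext.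
have [Sp_f1 _ _] := fg1.
have [f2 [g2 [fg2 f2y f2_fix]]] := Sp_to_axis (f1 y) i1.
exists (f2 \o f1), (g1 \o g2); split; first exact: Sp_cancel_comp.
  rewrite /= f1x f2_fix //; first by rewrite /ek eq_sym (negbTE i01).
  by rewrite -f1x (Sp_hq Sp_f1).
by rewrite /= f2y (Sp_ip Sp_f1).
Qed.

End SpNormalForm.
Arguments ek {R n}.

Lemma same_orbit_of_inv2 (R : rcfType) n (i0 i1 : 'I_n) (W1 W2 : hvec R n -> Prop)
    (x1 v1 x2 v2 : hvec R n) :
  i0 != i1 -> onb W1 x1 v1 -> onb W2 x2 v2 -> inv2 x1 v1 = inv2 x2 v2 -> same_orbit W1 W2.
Proof.
move=> i01 [x1_1 v1_1 x1v1 W1E] [x2_1 v2_1 x2v2 W2E] inv12.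
have [u1 [y1 [v1E y1x1 y1_2 u1_re u1_2]]] := onb_decomposition x1_1 v1_1 x1v1.
have [u2 [y2 [v2E y2x2 y2_2 u2_re u2_2]]] := onb_decomposition x2_1 v2_1 x2v2.
have [c [c1 u1c]] : exists c, qnorm2 c = 1 /\ qmul u1 c = qmul c u2.
  by apply: imaginary_conjugate; rewrite // u1_2 u2_2 inv12.
have [f1 [_ [[Sp_f1 _ _] f1x f1y]]] := Sp_normal_form i01 x1_1 y1x1.
have [f2 [g2 [[Sp_f2 Sp_g2 gf2] f2x f2y]]] := Sp_normal_form i01 x2_1 y2x2.
rewrite y1_2 inv12 -y2_2 in f1y; move: f1y f2y; set b := Num.sqrt _ => f1y f2y.
have Sp_D : is_Sp (rdiag (fun _ : 'I_n => c)) by apply: rdiag_Sp.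
pose f := g2 \o rdiag (fun _ => c) \o f1.
have fx1 : f x1 = lmulv c x2.
  by rewrite /f /= f1x rdiag_const_ek (Sp_lmul Sp_g2) -f2x gf2.
have fv1 : f v1 = lmulv c v2.
  rewrite v1E v2E /f /= (Sp_add Sp_f1) (Sp_lmul Sp_f1) f1x f1y.
  rewrite (Sp_add Sp_D) (Sp_lmul Sp_D) (Sp_scal Sp_D) !rdiag_const_ek.
  have -> : vadd (lmulv u1 (lmulv c (ek i0))) (vscale b (lmulv c (ek i1))) =
            lmulv c (vadd (lmulv u2 (ek i0)) (vscale b (ek i1))).
    by rewrite lmulv_comp u1c; vext.
  by rewrite (Sp_lmul Sp_g2) -f2x -f2y -(Sp_lmul Sp_f2) -(Sp_add Sp_f2) gf2.
have Sp_f : is_Sp f := Sp_comp (Sp_comp Sp_g2 Sp_D) Sp_f1.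
have c'1 : qnorm2 (qconj c) = 1 by rewrite qnorm2_conj.
by apply: (same_orbit_of_basis Sp_f c'1 W1E W2E); rewrite ?fx1 ?fv1 lmulv_conjK.
Qed.

Theorem lemma11p8 (R : rcfType) (n : nat) (hn : (3 <= n)%N) :
  (forall (W : hvec R n -> Prop) (x v x' v' : hvec R n),
      is_2plane W -> onb W x v -> onb W x' v' -> inv2 x v = inv2 x' v')
  /\
  (forall (W1 W2 : hvec R n -> Prop) (x1 v1 x2 v2 : hvec R n),
      is_2plane W1 -> is_2plane W2 -> onb W1 x1 v1 -> onb W2 x2 v2 ->
      (same_orbit W1 W2 <-> inv2 x1 v1 = inv2 x2 v2)).
Proof.
split=> [W x v x' v' _ | W1 W2 x1 v1 x2 v2 _ _ O1 O2]; first exact: inv2_onb.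
split; first exact: inv2_same_orbit.
have n1 : (1 < n)%N by apply: leq_trans hn.
exact: (@same_orbit_of_inv2 _ _ (Ordinal (ltnW n1)) (Ordinal n1)).
Qed.
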